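(* Let $S=S(\lambda_1,\ldots,\lambda_d)$ be a spider with $d\ge 2$ legs, and let $S'$ be the spider with $d-1$ legs obtained from $S$ by replacing two legs, of lengths $\lambda_i$ and $\lambda_j$ ($i\neq j$), by a single leg of length $\lambda_i+\lambda_j$ (so $S$ and $S'$ have the same number of vertices). If $S$ has a connected partition of type $\mu$, then $S'$ also has a connected partition of type $\mu$.
   Context: A spider $S(\lambda_1,\ldots,\lambda_d)$, for positive integers $\lambda_1,\ldots,\lambda_d$, is the tree consisting of a vertex $v$ (the center) together with $d$ vertex-disjoint paths (legs) having $\lambda_1,\ldots,\lambda_d$ vertices respectively, where $v$ is joined by an edge to one endpoint of each leg. A connected partition of a graph $G=(V,E)$ is a partition of $V$ into blocks each inducing a connected subgraph; its type is the integer partition of $|V|$ formed by the block sizes in decreasing order. *)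

From mathcomp Require Import all_boot.
Set Implicit Arguments. Unset Strict Implicit. Unset Printing Implicit Defensive.

Definition induces_connected (T : finType) (e : rel T) (B : {set T}) : bool :=
  [forall x in B, forall y in B,
     connect [rel u v | [&& e u v, u \in B & v \in B]] x y].

Definition connected_partition (T : finType) (e : rel T) (P : {set {set T}}) : bool :=
  partition P [set: T] && [forall B in P, induces_connected e B].

Definition ptype (T : finType) (P : {set {set T}}) : seq nat :=
  sort geq [seq #|B| | B : {set T} in P].

Definition has_cp_of_type (T : finType) (e : rel T) (mu : seq nat) : Prop :=
  exists P : {set {set T}}, connected_partition e P /\ ptype P = mu.

(* Vertices: None = the center; Some (Tagged i p) = the p-th vertex (0-based,
   p < lam_i) of leg i, vertex 0 of each leg being the one joined to the center. *)
Definition spider_vertex (lam : seq nat) : finType :=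
  option {i : 'I_(size lam) & 'I_(nth 0 lam i)}.

Definition spider_adj (lam : seq nat) : rel (spider_vertex lam) :=
  fun x y =>
    match x, y with
    | None, None => false
    | None, Some v => val (tagged v) == 0
    | Some u, None => val (tagged u) == 0
    | Some u, Some v =>
        (tag u == tag v) &&
        ((val (tagged u) == (val (tagged v)).+1) ||
         (val (tagged v) == (val (tagged u)).+1))
    end.

Definition merge_legs (lam : seq nat) (i j : nat) : seq nat :=
  (nth 0 lam i + nth 0 lam j) ::
    [seq nth 0 lam k | k <- iota 0 (size lam) & (k != i) && (k != j)].

From mathcomp Require Import all_boot zify.
Set Implicit Arguments. Unset Strict Implicit. Unset Printing Implicit Defensive.

(* Let B be the block of a connected partition of S that contains
   the center.  B is connected, so it meets legs i and j in initial segments,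
   of lengths a_i and a_j.  Lay out the merged leg of S' as
     (leg i)[0, a_i) ++ (leg j)[0, a_j) ++ (leg i)[a_i, lam_i) ++ (leg j)[a_j, lam_j)
   and keep all other legs unchanged.  This vertex bijection g maps every block
   to a connected set of the same size: an edge inside a block is mapped to an
   edge, except the edge (center, first vertex of leg j) of B, which is replaced
   by the path through the first a_i + 1 vertices of the merged leg, all in g(B).
   Hence the image partition is a connected partition of S' of the same type. *)

Definition within (T : finType) (e : rel T) (D : {set T}) : rel T :=
  [rel u v | [&& e u v, u \in D & v \in D]].

Lemma connect_map (T T' : finType) (e : rel T) (e' : rel T') (g : T -> T') :
  (forall x y, e x y -> connect e' (g x) (g y)) ->
  forall x y, connect e x y -> connect e' (g x) (g y).
Proof.
move=> ge x y /connectP [p]; elim: p x => [|z p IH] x /=; first by move=> _ ->.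
by case/andP => exz pz lastp; apply: connect_trans (ge _ _ exz) (IH _ pz lastp).
Qed.

Lemma mem_block_eq (T : finType) (P : {set {set T}}) (D B C : {set T}) (x : T) :
  partition P D -> B \in P -> C \in P -> x \in C -> (x \in B) = (C == B).
Proof.
case/and3P=> _ trivP _ BP CP xC; apply/idP/eqP => [xB|CB]; last by rewrite -CB.
by rewrite -(def_pblock trivP CP xC) (def_pblock trivP BP xB).
Qed.

Lemma has_cp_transfer (T T' : finType) (e : rel T) (e' : rel T')
    (g : T -> T') (f : T' -> T) (P : {set {set T}}) :
  cancel g f -> cancel f g -> connected_partition e P ->
  (forall C, C \in P -> forall x y, x \in C -> y \in C -> e x y ->
     connect (within e' (g @: C)) (g x) (g y)) ->
  has_cp_of_type e' (ptype P).
Proof.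
move=> gK fK /andP [partP /forallP connP] edge_path.
have ginj : injective g := can_inj gK.
exists [set g @: (C : {set T}) | C in P]; split.
  apply/andP; split.
    have -> : [set: T'] = g @: [set: T].
      by apply/setP => y; rewrite inE; apply/esym/imsetP; exists (f y).
    by rewrite imset_partition.
  apply/forallP => C0; apply/implyP => /imsetP [C CP ->].
  apply/forallP => x0; apply/implyP => /imsetP [x xC ->].
  apply/forallP => y0; apply/implyP => /imsetP [y yC ->].
  move: (connP C); rewrite CP => /forallP /(_ x); rewrite xC => /forallP /(_ y).
  rewrite yC; apply: connect_map => u v /and3P [euv uC vC]; exact: edge_path.
rewrite /ptype; apply/perm_sortP.
- by move=> a b; apply: leq_total.
- by move=> a b c ba cb; apply: leq_trans cb ba.
- by move=> a b /andP [ba ab]; apply/eqP; rewrite eqn_leq; apply/andP.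
have enum_img : perm_eq (enum [set g @: (C : {set T}) | C in P])
                         [seq g @: (C : {set T}) | C <- enum P].
  apply: uniq_perm; rewrite ?enum_uniq ?(map_inj_uniq (imset_inj ginj)) ?enum_uniq //.
  move=> C'; rewrite mem_enum; apply/imsetP/mapP => [] [C CP ->];
    by exists C; rewrite ?mem_enum in CP *.
apply: perm_trans (perm_map (fun C : {set T'} => #|C|) enum_img) _.
rewrite -map_comp (eq_map (g := fun C : {set T} => #|C|)) // => C /=.
exact: card_imset.
Qed.

(* Spider vertices are encoded as [None] (the center) or [Some (k, p)]
   (position p of leg k); [valid lam] singles out the codes of S(lam) and
   [adjc] is the adjacency of codes, independent of the leg lengths. *)
Definition code (lam : seq nat) (x : spider_vertex lam) : option (nat * nat) :=
  if x is Some u then Some (val (tag u), val (tagged u)) else None.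

Definition valid (lam : seq nat) (c : option (nat * nat)) : bool :=
  if c is Some (k, p) then (k < size lam) && (p < nth 0 lam k) else true.

Definition adjc (c d : option (nat * nat)) : bool :=
  match c, d with
  | None, None => false
  | None, Some (_, q) => q == 0
  | Some (_, p), None => p == 0
  | Some (k, p), Some (l, q) => (k == l) && ((p == q.+1) || (q == p.+1))
  end.

Lemma code_inj (lam : seq nat) : injective (@code lam).
Proof.
case=> [[k p]|] [[l q]|] //= [] /val_inj ekl epq; subst l.
by rewrite (val_inj epq).
Qed.

Lemma code_valid (lam : seq nat) (x : spider_vertex lam) : valid lam (code x).
Proof. by case: x => [[k p]|] //=; rewrite !ltn_ord. Qed.

Lemma code_surj (lam : seq nat) (c : option (nat * nat)) :
  valid lam c -> exists x : spider_vertex lam, code x = c.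
Proof.
case: c => [[k p] /andP [kl pl]|]; last by exists None.
by exists (Some (@Tagged _ (Ordinal kl) (fun k => 'I_(nth 0 lam k)) (Ordinal pl))).
Qed.

Lemma code_adj (lam : seq nat) (x y : spider_vertex lam) :
  spider_adj x y = adjc (code x) (code y).
Proof. by case: x => [[k p]|]; case: y => [[l q]|]. Qed.

Lemma adjc_sym : symmetric adjc.
Proof. by case=> [[k p]|] [[l q]|] //=; rewrite eq_sym orbC. Qed.

Definition lift_code (lam lam' : seq nat) (h : option (nat * nat) -> option (nat * nat))
    (x : spider_vertex lam) : spider_vertex lam' :=
  odflt None [pick y : spider_vertex lam' | code y == h (code x)].

Lemma lift_codeE (lam lam' : seq nat) h (x : spider_vertex lam) :
  valid lam' (h (code x)) -> code (lift_code lam' h x) = h (code x).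
Proof.
case/code_surj=> y ey; rewrite /lift_code; case: pickP => [z /eqP //|/(_ y)].
by rewrite ey eqxx.
Qed.

Lemma leg_prefix_connect (lam : seq nat) (D : {set spider_vertex lam}) k n
    (z : spider_vertex lam) :
  None \in D -> (forall v q, q <= n -> code v = Some (k, q) -> v \in D) ->
  code z = Some (k, n) -> connect (within (@spider_adj lam) D) None z.
Proof.
move=> centerD; elim: n z => [|n IH] z prefD cz.
  by apply/connect1/and3P; split; rewrite ?code_adj ?cz ?(prefD z 0).
have /andP [kl nl] : valid lam (Some (k, n.+1)) by rewrite -cz code_valid.
have [z' cz'] := @code_surj lam (Some (k, n)) (introT andP (conj kl (ltnW nl))).
apply: connect_trans (IH z' (fun v q qn => prefD v q (leqW qn)) cz') (connect1 _).
apply/and3P; split; rewrite ?(prefD z' n) ?(prefD z n.+1) //.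
by rewrite code_adj cz' cz /= !eqxx orbT.
Qed.

Definition prefix_len (P : pred nat) (n : nat) : nat := find (predC P) (iota 0 n).

Section PrefixLength.
Variables (P : pred nat) (n : nat).
Local Notation a := (prefix_len P n).

Lemma prefix_len_le : a <= n.
Proof. by rewrite -[leqRHS](size_iota 0) find_size. Qed.

Lemma prefix_len_in p : p < a -> P p.
Proof.
move=> pa; have := before_find 0 pa.
by rewrite nth_iota ?add0n ?(leq_trans pa prefix_len_le) //= => /negbFE.
Qed.

Lemma prefix_len_out : a < n -> ~~ P a.
Proof.
move=> an; have := @nth_find _ 0 (predC P) (iota 0 n).
by rewrite has_find size_iota nth_iota ?add0n //; apply.
Qed.

Lemma prefix_len_gt0 : 0 < n -> P 0 -> 0 < a.
Proof.
move=> n0 P0; rewrite lt0n; apply: contraTneq P0 => a0.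
by have := prefix_len_out; rewrite a0 n0; apply.
Qed.

Lemma prefix_len_side p q : p < n -> q < n -> (p == q.+1) || (q == p.+1) ->
  P p = P q -> (p < a) = (q < a).
Proof.
have step u v : v < n -> (u == v.+1) || (v == u.+1) -> P u = P v -> u < a -> v < a.
  move=> vn uv Puv ua; rewrite ltnNge; apply/negP => av.
  have va : v = a by lia.
  have an : a < n by rewrite -va.
  by move: (prefix_len_out an); rewrite -va -Puv prefix_len_in.
move=> pn qn pq Ppq; apply/idP/idP; first exact: step.
by apply: step; rewrite 1?orbC.
Qed.

End PrefixLength.

(* The legs of S(lam) other than i and j, in the order in which they appear,
   after the merged leg 0, in [merge_legs lam i j]. *)
Definition other_legs (lam : seq nat) (i j : nat) : seq nat :=
  [seq k <- iota 0 (size lam) | (k != i) && (k != j)].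

Lemma merge_legsE (lam : seq nat) (i j : nat) :
  merge_legs lam i j = (nth 0 lam i + nth 0 lam j) :: map (nth 0 lam) (other_legs lam i j).
Proof. by []. Qed.

Lemma mem_other_legs (lam : seq nat) (i j k : nat) :
  (k \in other_legs lam i j) = [&& k < size lam, k != i & k != j].
Proof. by rewrite mem_filter mem_iota /= add0n andbC. Qed.

Section MergeCodes.
Variables (lam : seq nat) (i j ai aj : nat).
Hypotheses (il : i < size lam) (jl : j < size lam) (ij : i != j).
Hypotheses (ail : ai <= nth 0 lam i) (ajl : aj <= nth 0 lam j).
Local Notation li := (nth 0 lam i).
Local Notation ks := (other_legs lam i j).

(* The merged leg (leg 0 of S') is laid out as
   (leg i)[0, ai) ++ (leg j)[0, aj) ++ (leg i)[ai, li) ++ (leg j)[aj, lj);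
   the other legs are renumbered according to [other_legs]. *)
Definition merge_code (c : option (nat * nat)) : option (nat * nat) :=
  if c is Some (k, p) then Some
    (if k == i then (0, if p < ai then p else p + aj)
     else if k == j then (0, if p < aj then ai + p else li + p)
     else ((index k ks).+1, p))
  else None.

Definition split_code (c : option (nat * nat)) : option (nat * nat) :=
  match c with
  | None => None
  | Some (0, q) => Some
     (if q < ai then (i, q) else if q < ai + aj then (j, q - ai)
      else if q < li + aj then (i, q - aj) else (j, q - li))
  | Some (t.+1, q) => Some (nth 0 ks t, q)
  end.

Lemma other_legs_nth t : t < size ks ->
  [/\ nth 0 ks t < size lam, nth 0 ks t != i & nth 0 ks t != j].
Proof. by move=> tks; apply/and3P; rewrite -mem_other_legs mem_nth. Qed.

Lemma merge_code_valid c : valid lam c -> valid (merge_legs lam i j) (merge_code c).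
Proof.
case: c => [[k p]|] //= /andP [kl pl]; rewrite merge_legsE.
case: eqP => [eki | ki] /=; first by subst k; case: ifP => /=; lia.
case: eqP => [ekj | kj] /=; first by subst k; case: ifP => /=; lia.
have kks : k \in ks by rewrite mem_other_legs kl; apply/and3P; split => //; apply/eqP.
by rewrite ltnS size_map index_mem kks (nth_map 0) ?index_mem // nth_index.
Qed.

Lemma split_code_valid c : valid (merge_legs lam i j) c -> valid lam (split_code c).
Proof.
rewrite merge_legsE; case: c => [[[|t] q]|] //= qlt.
  by do 3?case: ifP => /= ?; rewrite ?il ?jl; lia.
move: qlt; rewrite ltnS size_map => /andP [tks].
by case/other_legs_nth: (tks) => -> _ _; rewrite (nth_map 0).
Qed.

Lemma merge_codeK c : valid lam c -> split_code (merge_code c) = c.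
Proof.
case: c => [[k p]|] //= /andP [kl pl].
case: eqP => [eki | ki] /=; first subst k.
  case: (ltnP p ai) => pa; first by rewrite pa.
  have [-> ->] : (p + aj < ai) = false /\ (p + aj < ai + aj) = false by lia.
  have -> : p + aj < li + aj by lia.
  by rewrite addnK.
case: eqP => [ekj | kj] /=; first subst k.
  case: (ltnP p aj) => pa.
    have [-> ->] : (ai + p < ai) = false /\ ai + p < ai + aj by lia.
    by rewrite addKn.
  have [-> [-> ->]] : (li + p < ai) = false /\
    (li + p < ai + aj) = false /\ (li + p < li + aj) = false by lia.
  by rewrite addKn.
have kks : k \in ks by rewrite mem_other_legs kl; apply/and3P; split => //; apply/eqP.
by rewrite nth_index.
Qed.

Lemma split_codeK c : valid (merge_legs lam i j) c -> merge_code (split_code c) = c.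
Proof.
rewrite merge_legsE; case: c => [[[|t] q]|] //= qlt.
  have [ji ij'] : (j == i) = false /\ (i == j) = false by rewrite eq_sym (negbTE ij).
  case: ifP => q1; first by rewrite eqxx q1.
  case: ifP => q2; first by rewrite ji eqxx ifT; [congr (Some (_, _)) | ]; lia.
  case: ifP => q3; first by rewrite eqxx ifN; [congr (Some (_, _)) | ]; lia.
  by rewrite ji eqxx ifN; [congr (Some (_, _)) | ]; lia.
move: qlt; rewrite ltnS size_map => /andP [tks _].
case/other_legs_nth: (tks) => _ /negbTE -> /negbTE ->.
by rewrite index_uniq // filter_uniq // iota_uniq.
Qed.

End MergeCodes.

Lemma spider_adj_sym (lam : seq nat) : symmetric (@spider_adj lam).
Proof. by move=> x y; rewrite !code_adj adjc_sym. Qed.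

Lemma within_sym (T : finType) (e : rel T) (D : {set T}) :
  symmetric e -> symmetric (within e D).
Proof. by move=> esym x y; rewrite /within /= esym; case: (x \in D); case: (y \in D). Qed.

(* The bijection S -> S' determined by a set B containing the center, the block
   of the center in a connected partition of S. *)
Section CenterBlock.
Variables (lam : seq nat) (i j : nat).
Hypotheses (il : i < size lam) (jl : j < size lam) (ij : i != j).
Hypotheses (li : 0 < nth 0 lam i) (lj : 0 < nth 0 lam j).
Variable B : {set spider_vertex lam}.
Hypothesis centerB : None \in B.

Definition coded_in (c : option (nat * nat)) : bool := [exists x in B, code x == c].

Lemma coded_inE (x : spider_vertex lam) : coded_in (code x) = (x \in B).
Proof.
apply/existsP/idP => [[y /andP [yB /eqP /code_inj <-]] // | xB].
by exists x; rewrite xB eqxx.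
Qed.

Definition block_prefix (k : nat) : nat :=
  prefix_len (fun p => coded_in (Some (k, p))) (nth 0 lam k).

Local Notation ai := (block_prefix i).
Local Notation aj := (block_prefix j).
Local Notation lam' := (merge_legs lam i j).

Definition merge_map : spider_vertex lam -> spider_vertex lam' :=
  lift_code lam' (merge_code lam i j ai aj).
Definition split_map : spider_vertex lam' -> spider_vertex lam :=
  lift_code lam (split_code lam i j ai aj).

Lemma merge_mapE x : code (merge_map x) = merge_code lam i j ai aj (code x).
Proof. by apply: lift_codeE; apply: merge_code_valid; rewrite ?code_valid ?prefix_len_le. Qed.

Lemma split_mapE x : code (split_map x) = split_code lam i j ai aj (code x).
Proof. by apply: lift_codeE; apply: split_code_valid; rewrite ?code_valid ?prefix_len_le. Qed.

Lemma merge_mapK : cancel merge_map split_map.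
Proof.
by move=> x; apply: code_inj; rewrite split_mapE merge_mapE merge_codeK ?code_valid ?prefix_len_le.
Qed.

Lemma split_mapK : cancel split_map merge_map.
Proof.
move=> x; apply: code_inj.
by rewrite merge_mapE split_mapE split_codeK ?code_valid ?prefix_len_le.
Qed.

Lemma coded_in_center : coded_in None.
Proof. by rewrite -[None]/(code (None : spider_vertex lam)) coded_inE. Qed.

Lemma block_prefix_side k p q : p < nth 0 lam k -> q < nth 0 lam k ->
  (p == q.+1) || (q == p.+1) -> coded_in (Some (k, p)) = coded_in (Some (k, q)) ->
  (p < block_prefix k) = (q < block_prefix k).
Proof. exact: prefix_len_side. Qed.

Lemma block_prefix_in k p : p < block_prefix k -> coded_in (Some (k, p)).
Proof. exact: prefix_len_in. Qed.

Lemma block_prefix_gt0 k : 0 < nth 0 lam k -> coded_in (Some (k, 0)) -> 0 < block_prefix k.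
Proof. exact: prefix_len_gt0. Qed.

Lemma merge_code_adj c d : valid lam c -> valid lam d -> adjc c d ->
  coded_in c = coded_in d ->
  [|| adjc (merge_code lam i j ai aj c) (merge_code lam i j ai aj d),
      (c == None) && (d == Some (j, 0)) | (d == None) && (c == Some (j, 0))].
Proof.
have ai0 : coded_in (Some (i, 0)) = coded_in None -> 0 < ai.
  by rewrite coded_in_center => /(block_prefix_gt0 li).
case: c => [[k p]|]; case: d => [[l q]|] //=.
- move=> /andP [kl pl] /andP [_ ql] /andP [/eqP ekl pq] Bpq; subst l.
  case: eqP => [eki | ki] /=; first subst k.
    by rewrite (block_prefix_side pl ql pq Bpq); case: ifP; lia.
  case: eqP => [ekj | kj] /=; last by rewrite eqxx pq.
  by subst k; rewrite (block_prefix_side pl ql pq Bpq); case: ifP; lia.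
- move=> _ _ /eqP p0 Bp; subst p.
  case: eqP => [eki | ki] /=; first by subst k; rewrite ai0.
  by case: eqP => [-> | kj] /=; rewrite ?eqxx ?orbT.
- move=> _ _ /eqP q0 Bq; subst q.
  case: eqP => [eli | li_ne] /=; first by subst l; rewrite ai0.
  by case: eqP => [-> | lj_ne] /=; rewrite ?eqxx ?orbT.
Qed.

(* The first ai + 1 vertices of the merged leg all lie in the image of B when
   the first vertex of leg j is in B; they connect the center to the image of
   that vertex. *)
Lemma merge_center_path y : y \in B -> code y = Some (j, 0) ->
  connect (within (@spider_adj lam') (merge_map @: B)) (merge_map None) (merge_map y).
Proof.
move=> yB cy.
have aj0 : 0 < aj by apply: block_prefix_gt0; rewrite // -cy coded_inE.
have center_img : merge_map None = None by apply: code_inj; rewrite merge_mapE.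
rewrite center_img; apply: (@leg_prefix_connect lam' (merge_map @: B) 0 ai).
- by rewrite -center_img imset_f.
- move=> v q qa cv; rewrite -(split_mapK v) imset_f // -coded_inE split_mapE cv /=.
  case: ifP => qai; first exact: block_prefix_in.
  have [-> ->] : q < ai + aj /\ q - ai = 0 by lia.
  exact: block_prefix_in.
- by rewrite merge_mapE cy /= eq_sym (negbTE ij) eqxx aj0 addn0.
Qed.

Lemma merge_map_edge (C : {set spider_vertex lam}) x y : x \in C -> y \in C ->
  spider_adj x y -> (x \in B) = (y \in B) -> (x \in B -> C = B) ->
  connect (within (@spider_adj lam') (merge_map @: C)) (merge_map x) (merge_map y).
Proof.
move=> xC yC xy xyB CB.
have := merge_code_adj (code_valid x) (code_valid y); rewrite -code_adj !coded_inE.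
case/(_ xy xyB)/or3P => [adj | /andP [/eqP cx /eqP cy] | /andP [/eqP cy /eqP cx]].
- by apply/connect1/and3P; rewrite code_adj !merge_mapE !imset_f.
- have xN : x = None by apply: code_inj.
  have xB : x \in B by rewrite xN.
  by rewrite xN (CB xB); apply: merge_center_path; rewrite // -xyB.
- have yN : y = None by apply: code_inj.
  have yB : y \in B by rewrite yN.
  rewrite (sym_connect_sym (within_sym _ (@spider_adj_sym lam'))) yN.
  by rewrite -xyB in yB; rewrite (CB yB); apply: merge_center_path.
Qed.

End CenterBlock.

Theorem proposition6p1 (lam : seq nat) (i j : nat) (mu : seq nat) :
  2 <= size lam ->
  all (fun l => 0 < l) lam ->
  i < size lam -> j < size lam -> i != j ->
  has_cp_of_type (@spider_adj lam) mu ->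
  has_cp_of_type (@spider_adj (merge_legs lam i j)) mu.
Proof.
move=> _ /allP legs_pos il jl ij [P [cpP <-]].
have li : 0 < nth 0 lam i by apply/legs_pos/mem_nth.
have lj : 0 < nth 0 lam j by apply/legs_pos/mem_nth.
have partP : partition P [set: spider_vertex lam] by case/andP: cpP.
have coverP : cover P = [set: spider_vertex lam] by case/and3P: partP => /eqP.
pose B := pblock P (None : spider_vertex lam).
have BP : B \in P by apply: pblock_mem; rewrite coverP inE.
have centerB : None \in B by rewrite mem_pblock coverP inE.
apply: (has_cp_transfer (merge_mapK il jl ij B) (split_mapK il jl ij B) cpP).
move=> C CP x y xC yC xy; apply: merge_map_edge => //.
- by rewrite !(mem_block_eq partP BP CP).
- by rewrite (mem_block_eq partP BP CP xC) => /eqP.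
Qed.
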